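(* Let $A$ be a ring, $\mathcal C$ a coseparable $A$-coring with cointegral $\delta$, and $e\in\mathcal C^A$. Let $\mathbb X^{\mathcal C}_{\delta,e}$ be the supplemented S-category described in the context. A right $\mathcal C$-comodule $M$ is formally $\mathbb X^{\mathcal C}_{\delta,e}$-smooth if and only if the map $$\kappa_M:M\to M,\qquad m\mapsto \sum m_{(0)}\,\delta(e\otimes_A m_{(1)})$$ has a left inverse in $\mathrm{End}_A(M)$ (the ring of right $A$-module endomorphisms of $M$).
   Context: An $A$-coring $\mathcal C$ has coproduct $\Delta_{\mathcal C}(c)=\sum c_{(1)}\otimes_A c_{(2)}$ and counit $\varepsilon_{\mathcal C}$; right comodules $M$ have coaction $\varrho^M(m)=\sum m_{(0)}\otimes_A m_{(1)}$; $\mathfrak M^{\mathcal C}$ is the category of right $\mathcal C$-comodules, $\mathfrak M_A$ that of right $A$-modules. $\mathcal C$ is coseparable with cointegral $\delta$ if $\delta:\mathcal C\otimes_A\mathcal C\to A$ is an $(A,A)$-bimodule map with $\delta\circ\Delta_{\mathcal C}=\varepsilon_{\mathcal C}$ and $(\mathcal C\otimes_A\delta)\circ(\Delta_{\mathcal C}\otimes_A\mathcal C)=(\delta\otimes_A\mathcal C)\circ(\mathcal C\otimes_A\Delta_{\mathcal C})$. $\mathcal C^A=\{c\in\mathcal C: ac=ca\ \forall a\in A\}$. General definitions: an S-category is a pair of functors $u^*:\mathfrak X\to\bar{\mathfrak X}$, $u_*:\bar{\mathfrak X}\to\mathfrak X$ with $u^*\dashv u_*$ and a chosen natural left inverse $\nu$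 of the unit $\eta$; it is supplemented by a functor $u_!:\bar{\mathfrak X}\to\mathfrak X$ and natural transformation $\bar\eta:\mathrm{Id}\to u^*u_!$; one sets $r_y=\nu_{u_!(y)}\circ u_*(\bar\eta_y):u_*(y)\to u_!(y)$. An object $x\in\mathfrak X$ is formally $\mathbb X$-smooth if $\mathfrak X(x,r_y):g\mapsto r_y\circ g$ is surjective for all $y\in\bar{\mathfrak X}$, and formally $\mathbb X$-cosmooth if $\mathfrak X(r_y,x):g\mapsto g\circ r_y$ is surjective for all $y$. $\mathbb X^{\mathcal C}_{\delta,e}$: $\mathfrak X=\mathfrak M^{\mathcal C}$, $\bar{\mathfrak X}=\mathfrak M_A$, $u^*$ the forgetful functor, $u_*=-\otimes_A\mathcal C$ (right adjoint to $u^*$), $\nu_M:M\otimes_A\mathcal C\to M$, $m\otimes_A c\mapsto\sum m_{(0)}\delta(m_{(1)}\otimes_A c)$, $u_!=-\otimes_A\mathcal C$, $\bar\eta_N:N\to N\otimes_A\mathcal C$, $n\mapsto n\otimes_A e$. Thus for $N\in\mathfrak M_A$, $r_N:N\otimes_A\mathcal C\to N\otimes_A\mathcal C$, $n\otimes_A c\mapsto\sum n\otimes_A e_{(1)}\delta(e_{(2)}\otimes_A c)$. So $M$ is formally smooth iff for every right $A$-module $N$, $\mathrm{Hom}^{\mathcal C}(M,N\otimes_A\mathcal C)\to\mathrm{Hom}^{\mathcal C}(M,N\otimes_A\mathcal C)$, $g\mapsto r_N\circ g$, is surjective. *)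

(* Right A-modules are left modules over the converse ring A^c.
   Tensor products  N (x)_A C  are given by their universal property
   (record [tensor]); the main theorem quantifies over an arbitrary
   choice of such tensor products, one for every right A-module N. *)
From HB Require Import structures.
From mathcomp Require Import all_boot all_order all_algebra.
Set Implicit Arguments. Unset Strict Implicit. Unset Printing Implicit Defensive.
Import GRing.Theory.
Local Open Scope ring_scope.

Notation rmod A := (lmodType (GRing.converse A)).

Definition ract (A : pzRingType) (M : rmod A) (m : M) (a : A) : M :=
  (a : GRing.converse A) *: m.

Definition addmap (U V : zmodType) (f : U -> V) : Prop :=
  forall x y, f (x + y) = f x + f y.

Definition rlinear (A : pzRingType) (M N : rmod A) (f : M -> N) : Prop :=
  addmap f /\ forall m a, f (ract m a) = ract (f m) a.

Record bimod (A : pzRingType) := Bimod {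
  bm_sort :> rmod A;
  lact : A -> bm_sort -> bm_sort;
  lact1 : forall c, lact 1 c = c;
  lactM : forall a b c, lact (a * b) c = lact a (lact b c);
  lactDl : forall a b c, lact (a + b) c = lact a c + lact b c;
  lactDr : forall a c d, lact a (c + d) = lact a c + lact a d;
  lact_ract : forall a b c, lact a (ract c b) = ract (lact a c) b
}.

Definition balanced (A : pzRingType) (N : rmod A) (C : bimod A) (Z : zmodType)
  (f : N -> C -> Z) : Prop :=
  [/\ forall n n' c, f (n + n') c = f n c + f n' c,
      forall n c c', f n (c + c') = f n c + f n c'
    & forall n a c, f (ract n a) c = f n (lact a c)].

Record tensor (A : pzRingType) (N : rmod A) (C : bimod A) := Tensor {
  tsort :> rmod A;
  tens : N -> C -> tsort;
  tens_balanced : balanced tens;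
  tens_ract : forall n c a, ract (tens n c) a = tens n (ract c a);
  tlift : forall Z : zmodType, (N -> C -> Z) -> tsort -> Z;
  tlift_additive : forall (Z : zmodType) (f : N -> C -> Z),
      balanced f -> addmap (tlift f);
  tlift_tens : forall (Z : zmodType) (f : N -> C -> Z),
      balanced f -> forall n c, tlift f (tens n c) = f n c;
  tens_ext : forall (Z : zmodType) (g h : tsort -> Z), addmap g -> addmap h ->
      (forall n c, g (tens n c) = h (tens n c)) -> g = h
}.

Definition tensor_functor (A : pzRingType) (C : bimod A) :=
  forall N : rmod A, tensor N C.


Definition tlact (A : pzRingType) (C : bimod A) (tp : tensor_functor C)
  (a : A) : tp C -> tp C :=
  tlift (fun x y => tens (tp C) (lact a x) y).

Definition lassoc (A : pzRingType) (C : bimod A) (tp : tensor_functor C)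
  (N : rmod A) (n : N) : tp C -> tp (tp N) :=
  tlift (fun x y => tens (tp (tp N)) (tens (tp N) n x) y).

Definition idDelta (A : pzRingType) (C : bimod A) (tp : tensor_functor C)
  (Delta : C -> tp C) (N : rmod A) : tp N -> tp (tp N) :=
  tlift (fun n c => lassoc n (Delta c)).

Definition is_coring (A : pzRingType) (C : bimod A) (tp : tensor_functor C)
  (Delta : C -> tp C) (eps : C -> A) : Prop :=
  [/\ rlinear Delta /\ (forall a c, Delta (lact a c) = tlact a (Delta c)),
      (addmap eps /\ forall a c, eps (lact a c) = a * eps c)
        /\ (forall c a, eps (ract c a) = eps c * a),
      forall c, tlift (fun x y => tens (tp (tp C)) (Delta x) y) (Delta c)
                = idDelta Delta (Delta c),
      forall c, tlift (fun x y => lact (eps x) y) (Delta c) = c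
    &
      forall c, tlift (fun x y => ract x (eps y)) (Delta c) = c].

Definition is_cointegral (A : pzRingType) (C : bimod A) (tp : tensor_functor C)
  (Delta : C -> tp C) (eps : C -> A) (delta : tp C -> A) : Prop :=
  [/\ addmap delta,
      forall a w, delta (tlact a w) = a * delta w,
      forall w a, delta (ract w a) = delta w * a,
      forall c, delta (Delta c) = eps c
    & (* (C (x) delta) o (Delta (x) C) = (delta (x) C) o (C (x) Delta)
         as maps C (x) C -> C, evaluated on x (x) y *)
      forall x y,
        tlift (fun c u => ract c (delta (tens (tp C) u y))) (Delta x)
        = tlift (fun u v => lact (delta (tens (tp C) x u)) v) (Delta y)].

Definition is_comodule (A : pzRingType) (C : bimod A) (tp : tensor_functor C)
  (Delta : C -> tp C) (eps : C -> A) (M : rmod A) (rho : M -> tp M) : Prop :=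
  [/\ rlinear rho,
      forall m, tlift (fun u c => tens (tp (tp M)) (rho u) c) (rho m)
                = idDelta Delta (rho m)
    &
      forall m, tlift (fun u c => ract u (eps c)) (rho m) = m].

Definition comod_hom (A : pzRingType) (C : bimod A) (tp : tensor_functor C)
  (M N : rmod A) (rhoM : M -> tp M) (rhoN : N -> tp N) (f : M -> N) : Prop :=
  rlinear f /\
  forall m, rhoN (f m) = tlift (fun u c => tens (tp N) (f u) c) (rhoM m).

Definition r_map (A : pzRingType) (C : bimod A) (tp : tensor_functor C)
  (Delta : C -> tp C) (delta : tp C -> A) (e : C) (N : rmod A) : tp N -> tp N :=
  tlift (fun n c => tens (tp N) n
           (tlift (fun u v => ract u (delta (tens (tp C) v c))) (Delta e))).

Definition formally_smooth (A : pzRingType) (C : bimod A) (tp : tensor_functor C)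
  (Delta : C -> tp C) (delta : tp C -> A) (e : C)
  (M : rmod A) (rho : M -> tp M) : Prop :=
  forall (N : rmod A) (g : M -> tp N),
    comod_hom rho (idDelta Delta (N:=N)) g ->
    exists h : M -> tp N,
      comod_hom rho (idDelta Delta (N:=N)) h /\
      (forall m, r_map Delta delta e (h m) = g m).

Definition kappa (A : pzRingType) (C : bimod A) (tp : tensor_functor C)
  (delta : tp C -> A) (e : C) (M : rmod A) (rho : M -> tp M) : M -> M :=
  fun m => tlift (fun u c => ract u (delta (tens (tp C) e c))) (rho m).

From HB Require Import structures.
From mathcomp Require Import all_boot all_order all_algebra.
Set Implicit Arguments. Unset Strict Implicit. Unset Printing Implicit Defensive.
Import GRing.Theory.
Local Open Scope ring_scope.

(* Writing sigma(c) = delta(e (x) c_(1)) c_(2), the cointegral identity says that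
   r_N = N (x) sigma, so r is natural in N; together with coassociativity of rho
   this gives the key identity  r_M o rho = (kappa_M (x) C) o rho.  Comodule maps
   g : M -> N (x) C are exactly the maps (f (x) C) o rho with f : M -> N right
   A-linear, recovered as f = (N (x) eps) o g (cofreeness of N (x) C).
   - If M is smooth, lifting g = rho gives h = (phi (x) C) o rho with r_M o h = rho,
     hence rho = ((phi o kappa_M) (x) C) o rho; applying M (x) eps: phi o kappa_M = id.
   - If phi o kappa_M = id, then for g = (f (x) C) o rho the comodule map
     h = ((f o phi) (x) C) o rho satisfies r_N o h = ((f o phi o kappa_M) (x) C) o rho = g. *)

Section RightModules.
Variable A : pzRingType.

Lemma ractDl (M : rmod A) (x y : M) a : ract (x + y) a = ract x a + ract y a.
Proof. exact: scalerDr. Qed.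

Lemma ractDr (M : rmod A) (x : M) a b : ract x (a + b) = ract x a + ract x b.
Proof. exact: scalerDl. Qed.

Lemma ractA (M : rmod A) (x : M) a b : ract (ract x a) b = ract x (a * b).
Proof. exact: scalerA. Qed.

Lemma rlinear_comp (M N P : rmod A) (k : M -> N) (k' : N -> P) :
  rlinear k -> rlinear k' -> rlinear (fun x => k' (k x)).
Proof. by move=> [k1 k2] [l1 l2]; split=> [x y|x a]; rewrite ?k1 ?l1 ?k2 ?l2. Qed.

End RightModules.

Section Tensor.
Variables (A : pzRingType) (N : rmod A) (C : bimod A) (t : tensor N C).

Lemma tensDl n n' c : tens t (n + n') c = tens t n c + tens t n' c.
Proof. by case: (tens_balanced t). Qed.

Lemma tensDr n c c' : tens t n (c + c') = tens t n c + tens t n c'.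
Proof. by case: (tens_balanced t). Qed.

Lemma tens_ractl n a c : tens t (ract n a) c = tens t n (lact a c).
Proof. by case: (tens_balanced t). Qed.

Lemma tens_rlinear n : rlinear (tens t n).
Proof. by split=> [x y|x a]; rewrite ?tensDr ?tens_ract. Qed.

Lemma tensor_ext (Z : zmodType) (g h : t -> Z) :
  addmap g -> addmap h -> (forall n c, g (tens t n c) = h (tens t n c)) ->
  forall w, g w = h w.
Proof. by move=> hg hh E w; rewrite (tens_ext hg hh E). Qed.

(* Lifts of pointwise equal balanced maps agree; this avoids function extensionality. *)
Lemma eq_tlift (Z : zmodType) (F G : N -> C -> Z) :
  balanced F -> (forall n c, F n c = G n c) -> forall w : t, tlift F w = tlift G w.
Proof.
move=> hF FG.
have hG : balanced G by case: hF => h1 h2 h3; split=> *; rewrite -!FG ?h1 ?h2 ?h3.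
apply: tensor_ext; try exact: tlift_additive.
by move=> n c; rewrite !tlift_tens.
Qed.

Lemma balanced_comp (Z Z' : zmodType) (F : N -> C -> Z) (k : Z -> Z') :
  addmap k -> balanced F -> balanced (fun n c => k (F n c)).
Proof. by move=> hk [h1 h2 h3]; split=> *; rewrite ?h1 ?h2 ?h3 ?hk. Qed.

Lemma tlift_comp (Z Z' : zmodType) (F : N -> C -> Z) (k : Z -> Z') :
  addmap k -> balanced F ->
  forall w : t, k (tlift F w) = tlift (fun n c => k (F n c)) w.
Proof.
move=> hk hF; apply: tensor_ext.
- by move=> x y; rewrite (tlift_additive hF) hk.
- exact/tlift_additive/balanced_comp.
- by move=> n c; rewrite !tlift_tens //; exact: balanced_comp.
Qed.

Lemma tlift_rlinear (M : rmod A) (F : N -> C -> M) :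
  balanced F -> (forall n c a, F n (ract c a) = ract (F n c) a) ->
  rlinear (tlift (t:=t) F).
Proof.
move=> hF hr; split; first exact: tlift_additive.
move=> w a.
apply: (tensor_ext (g := fun w => tlift F (ract w a)) (h := fun w => ract (tlift F w) a)).
- by move=> x y; rewrite ractDl (tlift_additive hF).
- by move=> x y; rewrite (tlift_additive hF) ractDl.
- by move=> n c; rewrite tens_ract !tlift_tens.
Qed.

End Tensor.

Definition tmap (A : pzRingType) (C : bimod A) (N N' : rmod A)
  (t : tensor N C) (t' : tensor N' C) (k : N -> N') : t -> t' :=
  tlift (fun u c => tens t' (k u) c).
Arguments tmap {A C N N'} t t' k _.

Section Functoriality.
Variables (A : pzRingType) (C : bimod A).
Context {N N' : rmod A} {t : tensor N C} {t' : tensor N' C}.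
Variable k : N -> N'.
Hypothesis k_rlinear : rlinear k.

Lemma balanced_tmap : balanced (fun u (c : C) => tens t' (k u) c).
Proof.
case: k_rlinear => k1 k2; split=> [n n' c|n c c'|n a c].
- by rewrite k1 tensDl.
- by rewrite tensDr.
- by rewrite k2 tens_ractl.
Qed.

Lemma tmap_tens u c : tmap t t' k (tens t u c) = tens t' (k u) c.
Proof. exact/tlift_tens/balanced_tmap. Qed.

Lemma tmap_rlinear : rlinear (tmap t t' k).
Proof. by apply: tlift_rlinear; [exact: balanced_tmap | move=> *; rewrite tens_ract]. Qed.

Lemma tmap_additive : addmap (tmap t t' k).
Proof. by case: tmap_rlinear. Qed.

Lemma tlift_tmap (Z : zmodType) (H : N' -> C -> Z) : balanced H ->
  forall w, tlift H (tmap t t' k w) = tlift (t:=t) (fun u v => H (k u) v) w.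
Proof.
move=> hH.
have hHk : balanced (fun u v => H (k u) v).
  case: hH k_rlinear => [h1 h2 h3] [k1 k2].
  by split=> [n n' c|n c c'|n a c]; rewrite ?k1 ?h1 ?h2 ?k2 ?h3.
apply: tensor_ext.
- by move=> x y; rewrite tmap_additive (tlift_additive hH).
- exact: tlift_additive.
- by move=> n c; rewrite tmap_tens !tlift_tens.
Qed.

Lemma eq_tmap (k' : N -> N') : (forall x, k x = k' x) ->
  forall w, tmap t t' k w = tmap t t' k' w.
Proof. by move=> kk'; apply: eq_tlift; [exact: balanced_tmap | move=> *; rewrite kk']. Qed.

End Functoriality.

Lemma tmap_comp (A : pzRingType) (C : bimod A) (N N' N'' : rmod A)
  {t : tensor N C} {t' : tensor N' C} {t'' : tensor N'' C}
  (k : N -> N') (k' : N' -> N'') : rlinear k -> rlinear k' ->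
  forall w, tmap t' t'' k' (tmap t t' k w) = tmap t t'' (fun x => k' (k x)) w.
Proof. by move=> hk hk' w; rewrite /tmap [LHS]tlift_tmap //; exact: balanced_tmap. Qed.

Definition counit_map (A : pzRingType) (C : bimod A) (tp : tensor_functor C)
  (eps : C -> A) (N : rmod A) : tp N -> N :=
  tlift (fun u c => ract u (eps c)).
Arguments counit_map {A C} tp eps {N} _.

Section Bimodule.
Variables (A : pzRingType) (C : bimod A) (tp : tensor_functor C).

Lemma lact_rlinear a : rlinear (lact a : C -> C).
Proof. by split=> [x y|x b]; rewrite ?lactDr ?lact_ract. Qed.

Lemma tlact_tmap a w : tlact (tp:=tp) a w = tmap (tp C) (tp C) (lact a) w.
Proof. by []. Qed.

Lemma tlact_tens a (x y : C) : tlact (tp:=tp) a (tens (tp C) x y) = tens (tp C) (lact a x) y.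
Proof. exact/tmap_tens/lact_rlinear. Qed.

Lemma lassoc_tmap (N : rmod A) (n : N) w :
  lassoc (tp:=tp) n w = tmap (tp C) (tp (tp N)) (tens (tp N) n) w.
Proof. by []. Qed.

Lemma lassoc_add (N : rmod A) (n n' : N) w :
  lassoc (tp:=tp) (n + n') w = lassoc (tp:=tp) n w + lassoc (tp:=tp) n' w.
Proof.
apply: (tensor_ext (g := lassoc (n + n')) (h := fun w => lassoc n w + lassoc n' w)).
- by move=> x y; rewrite !lassoc_tmap (tmap_additive (tens_rlinear _ _)).
- move=> x y; rewrite !lassoc_tmap.
  by rewrite (tmap_additive (tens_rlinear _ n)) (tmap_additive (tens_rlinear _ n')) addrACA.
- move=> x y; rewrite !lassoc_tmap !tmap_tens ?tensDl //; exact: tens_rlinear.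
Qed.

Lemma lassoc_ract (N : rmod A) (n : N) a w :
  lassoc (tp:=tp) (ract n a) w = lassoc (tp:=tp) n (tlact a w).
Proof.
rewrite !lassoc_tmap tlact_tmap tmap_comp; try exact: tens_rlinear; last exact: lact_rlinear.
by apply: eq_tmap; [exact: tens_rlinear | move=> x; rewrite tens_ractl].
Qed.

End Bimodule.

Section Coring.
Variables (A : pzRingType) (C : bimod A) (tp : tensor_functor C).
Variables (Delta : C -> tp C) (eps : C -> A).
Hypothesis HC : is_coring Delta eps.

Lemma Delta_rlinear : rlinear Delta.
Proof. by case: HC => -[]. Qed.

Lemma Delta_lact a c : Delta (lact a c) = tlact a (Delta c).
Proof. by case: HC => -[]. Qed.

Lemma counit_lact c : tlift (fun x y => lact (eps x) y) (Delta c) = c.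
Proof. by case: HC. Qed.

Lemma balanced_eps_ract (N : rmod A) : balanced (fun (u : N) (c : C) => ract u (eps c)).
Proof.
case: HC => _ [[e1 e2] _] _ _ _; split=> [n n' c|n c c'|n a c].
- exact: ractDl.
- by rewrite e1 ractDr.
- by rewrite e2 ractA.
Qed.

Lemma balanced_eps_lact : balanced (fun u c : C => lact (eps u) c).
Proof.
case: HC => _ [[e1 _] e3] _ _ _; split=> [n n' c|n c c'|n a c].
- by rewrite e1 lactDl.
- by rewrite lactDr.
- by rewrite e3 lactM.
Qed.

Lemma balanced_lassoc_Delta (N : rmod A) :
  balanced (fun (n : N) c => lassoc (tp:=tp) n (Delta c)).
Proof.
split=> [n n' c|n c c'|n a c].
- exact: lassoc_add.
- by rewrite (proj1 Delta_rlinear) !lassoc_tmap (tmap_additive (tens_rlinear _ _)).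
- by rewrite lassoc_ract Delta_lact.
Qed.

Lemma idDelta_tens (N : rmod A) (n : N) c :
  idDelta Delta (tens (tp N) n c) = lassoc (tp:=tp) n (Delta c).
Proof. exact/tlift_tens/balanced_lassoc_Delta. Qed.

Lemma idDelta_additive (N : rmod A) : addmap (idDelta Delta (N:=N)).
Proof. exact/tlift_additive/balanced_lassoc_Delta. Qed.

Lemma idDelta_tmap (N N' : rmod A) (k : N -> N') : rlinear k -> forall x,
  idDelta Delta (tmap (tp N) (tp N') k x) =
  tmap (tp (tp N)) (tp (tp N')) (tmap (tp N) (tp N') k) (idDelta Delta x).
Proof.
move=> hk x; rewrite /idDelta (tlift_tmap hk); last exact: balanced_lassoc_Delta.
rewrite tlift_comp; [|exact/tmap_additive/tmap_rlinear|exact: balanced_lassoc_Delta].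
symmetry; apply: eq_tlift => [|n c].
  exact/balanced_comp/balanced_lassoc_Delta/tmap_additive/tmap_rlinear.
rewrite !lassoc_tmap tmap_comp; [|exact: tens_rlinear|exact: tmap_rlinear].
apply: eq_tmap => [|y]; last by rewrite tmap_tens.
by apply: rlinear_comp; [exact: tens_rlinear | exact: tmap_rlinear].
Qed.

Lemma counit_map_rlinear (N : rmod A) : rlinear (counit_map tp eps (N:=N)).
Proof.
apply: tlift_rlinear; first exact: balanced_eps_ract.
by case: HC => _ [_ e3] _ _ _ n c a; rewrite e3 ractA.
Qed.

Lemma counit_map_tens (N : rmod A) (n : N) c :
  counit_map tp eps (tens (tp N) n c) = ract n (eps c).
Proof. exact/tlift_tens/balanced_eps_ract. Qed.

Lemma counit_map_tmap (N N' : rmod A) (k : N -> N') : rlinear k ->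
  forall x, counit_map tp eps (tmap (tp N) (tp N') k x) = k (counit_map tp eps x).
Proof.
move=> hk x; rewrite /counit_map (tlift_tmap hk); last exact: balanced_eps_ract.
rewrite tlift_comp; [|by case: hk|exact: balanced_eps_ract].
symmetry; apply: eq_tlift => [|n c]; last by case: hk => _ ->.
by apply: balanced_comp; [case: hk | exact: balanced_eps_ract].
Qed.

Lemma counit_map_idDelta (N : rmod A) (x : tp N) :
  tmap (tp (tp N)) (tp N) (counit_map tp eps) (idDelta Delta x) = x.
Proof.
have hE := counit_map_rlinear N.
apply: (tensor_ext (g := fun x => tmap _ _ (counit_map tp eps) (idDelta Delta x))
                   (h := fun x => x)).
- by move=> y z; rewrite idDelta_additive (tmap_additive hE).
- by [].
move=> n c; rewrite idDelta_tens lassoc_tmap tmap_comp //; last exact: tens_rlinear.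
rewrite -[in RHS](counit_lact c) tlift_comp;
  [|exact: (proj1 (tens_rlinear _ _)) | exact: balanced_eps_lact].
apply: eq_tlift => [|u v]; last by rewrite counit_map_tens tens_ractl.
by apply: balanced_tmap; apply: rlinear_comp hE; exact: tens_rlinear.
Qed.

End Coring.

Section ComoduleMaps.
Variables (A : pzRingType) (C : bimod A) (tp : tensor_functor C).
Variables (Delta : C -> tp C) (eps : C -> A).
Hypothesis HC : is_coring Delta eps.
Variables (M : rmod A) (rho : M -> tp M).

Lemma comod_homE (N : rmod A) (rhoN : N -> tp N) (f : M -> N) :
  comod_hom rho rhoN f -> forall m, rhoN (f m) = tmap (tp M) (tp N) f (rho m).
Proof. by case. Qed.

Lemma comod_hom_factor (N : rmod A) (g : M -> tp N) :
  comod_hom rho (idDelta Delta (N:=N)) g ->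
  forall m, g m = tmap (tp M) (tp N) (fun x => counit_map tp eps (g x)) (rho m).
Proof.
move=> hg m; have [g_rlinear _] := hg.
rewrite -[LHS](counit_map_idDelta HC) (comod_homE hg) tmap_comp //.
exact: (counit_map_rlinear HC).
Qed.

Hypothesis HM : is_comodule Delta eps rho.

Lemma rho_rlinear : rlinear rho.
Proof. by case: HM. Qed.

Lemma rho_coassoc m : tmap (tp M) (tp (tp M)) rho (rho m) = idDelta Delta (rho m).
Proof. by case: HM => _ coassoc _; exact: coassoc. Qed.

Lemma rho_counit m : counit_map tp eps (rho m) = m.
Proof. by case: HM => _ _ counit; exact: counit. Qed.

Lemma rho_comod_hom : comod_hom rho (idDelta Delta (N:=M)) rho.
Proof. by split=> [|m]; [exact: rho_rlinear | rewrite -rho_coassoc]. Qed.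

Lemma comod_hom_tmap (N : rmod A) (k : M -> N) : rlinear k ->
  comod_hom rho (idDelta Delta (N:=N)) (fun m => tmap (tp M) (tp N) k (rho m)).
Proof.
move=> hk; split; first by apply: rlinear_comp rho_rlinear _; exact: tmap_rlinear.
move=> m; rewrite (idDelta_tmap HC hk) -rho_coassoc tmap_comp //.
  exact: rho_rlinear.
exact: tmap_rlinear.
Qed.

End ComoduleMaps.

Section Cointegral.
Variables (A : pzRingType) (C : bimod A) (tp : tensor_functor C).
Variables (Delta : C -> tp C) (eps : C -> A) (delta : tp C -> A) (e : C).
Hypothesis HC : is_coring Delta eps.
Hypothesis Hdelta : is_cointegral Delta eps delta.
Hypothesis He : forall a : A, lact a e = ract e a.

(* sigma(c) = delta(e (x) c_(1)) c_(2).  By the cointegral identity,  r_N = N (x) sigma. *)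
Definition sigma (c : C) : C :=
  tlift (fun u v => lact (delta (tens (tp C) e u)) v) (Delta c).

Definition econtract (N : rmod A) : tp N -> N :=
  tlift (fun u c => ract u (delta (tens (tp C) e c))).

Lemma delta_additive : addmap delta.
Proof. by case: Hdelta. Qed.

Lemma delta_tlact a w : delta (tlact a w) = a * delta w.
Proof. by case: Hdelta. Qed.

Lemma delta_ract w a : delta (ract w a) = delta w * a.
Proof. by case: Hdelta. Qed.

(* Centrality of e lets scalars pass through  delta(e (x) -). *)
Lemma delta_e_lact a c : delta (tens (tp C) e (lact a c)) = a * delta (tens (tp C) e c).
Proof. by rewrite -tens_ractl -He -tlact_tens delta_tlact. Qed.

Lemma balanced_sigma_summand : balanced (fun u v : C => lact (delta (tens (tp C) e u)) v).
Proof.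
split=> [u u' v|u v v'|u a v].
- by rewrite tensDr delta_additive lactDl.
- by rewrite lactDr.
- by rewrite -tens_ract delta_ract lactM.
Qed.

Lemma sigma_additive : addmap sigma.
Proof.
move=> c c'; rewrite /sigma (proj1 (Delta_rlinear HC)).
exact: (tlift_additive balanced_sigma_summand).
Qed.

Lemma sigma_lact a c : sigma (lact a c) = lact a (sigma c).
Proof.
rewrite /sigma (Delta_lact HC) tlact_tmap (tlift_tmap (lact_rlinear C a)) //;
  last exact: balanced_sigma_summand.
have lact_additive : addmap (lact a : C -> C) by move=> x y; rewrite lactDr.
rewrite (tlift_comp lact_additive balanced_sigma_summand).
symmetry; apply: eq_tlift => [|u v]; first exact: balanced_comp balanced_sigma_summand.
by rewrite delta_e_lact lactM.
Qed.

Lemma balanced_tens_sigma (N : rmod A) : balanced (fun (n : N) c => tens (tp N) n (sigma c)).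
Proof.
split=> [n n' c|n c c'|n a c].
- exact: tensDl.
- by rewrite sigma_additive tensDr.
- by rewrite sigma_lact tens_ractl.
Qed.

(* r_N = N (x) sigma: this is where the cointegral identity
   e_(1) delta(e_(2) (x) c) = delta(e (x) c_(1)) c_(2)  enters. *)
Lemma r_mapE (N : rmod A) (x : tp N) :
  r_map Delta delta e x = tlift (fun n c => tens (tp N) n (sigma c)) x.
Proof.
symmetry; apply: eq_tlift => [|n c]; first exact: balanced_tens_sigma.
by case: Hdelta => _ _ _ _ cointegral; rewrite /sigma cointegral.
Qed.

Lemma r_map_tmap (N N' : rmod A) (k : N -> N') : rlinear k -> forall x,
  r_map Delta delta e (tmap (tp N) (tp N') k x) = tmap (tp N) (tp N') k (r_map Delta delta e x).
Proof.
move=> hk x; rewrite !r_mapE (tlift_tmap hk (balanced_tens_sigma N')).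
rewrite (tlift_comp (tmap_additive hk) (balanced_tens_sigma N)).
symmetry; apply: eq_tlift => [|n c]; last by rewrite tmap_tens.
exact/balanced_comp/balanced_tens_sigma/tmap_additive.
Qed.

Lemma balanced_econtract (N : rmod A) :
  balanced (fun (u : N) c => ract u (delta (tens (tp C) e c))).
Proof.
split=> [n n' c|n c c'|n a c].
- exact: ractDl.
- by rewrite tensDr delta_additive ractDr.
- by rewrite delta_e_lact ractA.
Qed.

Lemma econtract_tens (N : rmod A) (n : N) c :
  econtract (tens (tp N) n c) = ract n (delta (tens (tp C) e c)).
Proof. exact/tlift_tens/balanced_econtract. Qed.

Lemma econtract_rlinear (N : rmod A) : rlinear (@econtract N).
Proof.
apply: tlift_rlinear; first exact: balanced_econtract.
by move=> n c a; rewrite -tens_ract delta_ract ractA.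
Qed.

Lemma econtract_lassoc (N : rmod A) (n : N) c :
  tmap (tp (tp N)) (tp N) (@econtract N) (lassoc n (Delta c)) = tens (tp N) n (sigma c).
Proof.
have hn := tens_rlinear (tp N) n.
rewrite lassoc_tmap tmap_comp //; last exact: econtract_rlinear.
rewrite /sigma (tlift_comp (proj1 hn) balanced_sigma_summand).
apply: eq_tlift => [|u v]; last by rewrite econtract_tens tens_ractl.
by apply: balanced_tmap; apply: rlinear_comp hn _; exact: econtract_rlinear.
Qed.

Section Comodule.
Variables (M : rmod A) (rho : M -> tp M).
Hypothesis HM : is_comodule Delta eps rho.

Lemma kappa_rlinear : rlinear (kappa delta e rho).
Proof. exact: rlinear_comp (rho_rlinear HM) (econtract_rlinear M). Qed.

Lemma r_map_rho m : r_map Delta delta e (rho m) = tmap (tp M) (tp M) (kappa delta e rho) (rho m).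
Proof.
have hK := econtract_rlinear M.
transitivity (tmap (tp (tp M)) (tp M) (@econtract M) (idDelta Delta (rho m))).
  rewrite r_mapE /idDelta (tlift_comp (tmap_additive hK) (balanced_lassoc_Delta HC M)).
  by apply: eq_tlift => [|n c]; [exact: balanced_tens_sigma | rewrite econtract_lassoc].
by rewrite -(rho_coassoc HM) tmap_comp //; exact: rho_rlinear HM.
Qed.

End Comodule.
End Cointegral.

Theorem proposition4p5 (A : pzRingType) (C : bimod A) (tp : tensor_functor C)
  (Delta : C -> tp C) (eps : C -> A) (delta : tp C -> A) (e : C)
  (HC : is_coring Delta eps)
  (Hdelta : is_cointegral Delta eps delta)
  (He : forall a : A, lact a e = ract e a)
  (M : rmod A) (rho : M -> tp M) (HM : is_comodule Delta eps rho) :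
  formally_smooth Delta delta e rho <->
  exists phi : M -> M, rlinear phi /\ forall m, phi (kappa delta e rho m) = m.
Proof.
have hkappa := kappa_rlinear Hdelta He HM.
split=> [smooth | [phi [hphi phiK]] N g g_hom].
- (* Lift the coaction itself through r_M; phi = (M (x) eps) o h inverts kappa_M. *)
  have [h [h_hom r_h]] := smooth M rho (rho_comod_hom HM).
  pose phi x := counit_map tp eps (h x).
  have [h_rlinear _] := h_hom.
  have hphi : rlinear phi := rlinear_comp h_rlinear (counit_map_rlinear HC M).
  have hphik := rlinear_comp hkappa hphi.
  exists phi; split=> // m.
  have rho_fixed : rho m = tmap (tp M) (tp M) (fun x => phi (kappa delta e rho x)) (rho m).
    by rewrite -[LHS]r_h (comod_hom_factor HC h_hom) (r_map_tmap HC Hdelta He hphi)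
      (r_map_rho HC Hdelta He HM) tmap_comp.
  by rewrite -{2}(rho_counit HM m) rho_fixed (counit_map_tmap HC hphik) (rho_counit HM).
- (* g = (f' (x) C) o rho with f' = (N (x) eps) o g; the lift is ((f' o phi) (x) C) o rho. *)
  pose f x := counit_map tp eps (g (phi x)).
  have [g_rlinear _] := g_hom.
  have hf : rlinear f := rlinear_comp hphi (rlinear_comp g_rlinear (counit_map_rlinear HC N)).
  exists (fun m => tmap (tp M) (tp N) f (rho m)); split; first exact: (comod_hom_tmap HC HM hf).
  move=> m; rewrite (r_map_tmap HC Hdelta He hf) (r_map_rho HC Hdelta He HM) tmap_comp //.
  rewrite (comod_hom_factor HC g_hom m).
  by apply: eq_tmap => [|x]; [exact: rlinear_comp | rewrite /f phiK].
Qed.
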